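(* Let $X$ be a real Hilbert space, let $n\in\{3,4,\ldots\}$, let $U_1,\ldots,U_n$ be closed linear subspaces of $X$, $P_i := P_{U_i}$, and $Z := U_1\cap\cdots\cap U_n$. Define $M\colon X^{n-1}\to X^n$ by $M(z_1,\ldots,z_{n-1}) = (x_1,\ldots,x_n)$, where $x_1 = P_1 z_1$, $x_i = P_i(x_{i-1}+z_i-z_{i-1})$ for $2\le i\le n-1$, and $x_n = P_n(x_1+x_{n-1}-z_{n-1})$. Writing $Q_i\colon X^n\to X$ for the $i$-th coordinate map, define $T\colon X^{n-1}\to X^{n-1}$ by \[ T\mathbf z = \mathbf z + \big((Q_2-Q_1)M\mathbf z,\,(Q_3-Q_2)M\mathbf z,\,\ldots,\,(Q_n-Q_{n-1})M\mathbf z\big). \] Let $0<\lambda<1$ and $\mathbf z_0=(z_{0,1},\ldots,z_{0,n-1})\in X^{n-1}$, generate $\mathbf z_{k+1} = (1-\lambda)\mathbf z_k+\lambda T\mathbf z_k$, and set $p := \frac{1}{n-1}(z_{0,1}+\cdots+z_{0,n-1})$. Then there exists $\bar{\mathbf z}\in X^{n-1}$ such that $\mathbf z_k\to\bar{\mathbf z}\in\operatorname{Fix}T$ (in norm) and \[ M\mathbf z_k\to M\bar{\mathbf z} = (P_Zp,\ldots,P_Zp)\in X^n. \] In particular, with $Q_1$ also denoting the first-coordinate map on $X^{n-1}$, $P_1(Q_1\mathbf z_k) = Q_1M\mathbf z_k\to P_Z(p)=\frac{1}{n-1}P_Z(z_{0,1}+\cdots+z_{0,n-1})$. Consequently, if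 $x_0\in X$ and $\mathbf z_0=(x_0,\ldots,x_0)$, then $P_1Q_1\mathbf z_k\to P_Zx_0$.
   Context: $P_S$ denotes the orthogonal projection onto a closed linear subspace $S$; $\operatorname{Fix}T$ is the fixed point set of $T$. The map $M$ is the Malitsky-Tam splitting map specialized to the normal cone operators $A_i=N_{U_i}$, whose resolvents are $P_i$. *)

From HB Require Import structures.
From mathcomp Require Import all_boot all_order all_algebra.
From mathcomp Require Import all_classical all_reals all_analysis.
Set Implicit Arguments. Unset Strict Implicit. Unset Printing Implicit Defensive.
Import Order.TTheory GRing.Theory Num.Theory.
Import numFieldNormedType.Exports.
Local Open Scope classical_set_scope.
Local Open Scope ring_scope.

(* ip is an inner product on X inducing the norm of X; together with
   completeness of X this makes X a real Hilbert space. *)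
Definition is_inner_product (R : realType) (X : normedModType R)
  (ip : X -> X -> R) : Prop :=
  (forall x y, ip x y = ip y x) /\
  (forall (a : R) (x y z : X), ip (a *: x + y) z = a * ip x z + ip y z) /\
  (forall x, ip x x = `|x| ^+ 2).

Definition closed_subspace (R : realType) (X : normedModType R) (U : set X) :=
  closed U /\ U 0 /\ (forall (a : R) (x y : X), U x -> U y -> U (a *: x + y)).

Definition is_orth_proj (R : realType) (X : normedModType R)
  (ip : X -> X -> R) (U : set X) (P : X -> X) : Prop :=
  forall x, U (P x) /\ (forall u, U u -> ip (x - P x) u = 0).

(* Vectors of X^{n-1} and X^n are represented by z : nat -> X, using only
   the coordinates 1..n-1 (resp. 1..n); P i is the projection P_i. *)

Fixpoint MT_x (R : realType) (X : normedModType R) (P : nat -> X -> X)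
  (z : nat -> X) (i : nat) : X :=
  match i with
  | 0 => 0
  | 1 => P 1%N (z 1%N)
  | (j.+1 as i') => P i' (MT_x P z j + z i' - z j)
  end.

Definition MT_M (R : realType) (X : normedModType R) (n : nat)
  (P : nat -> X -> X) (z : nat -> X) : nat -> X :=
  fun i => if i == n then P n (MT_x P z 1 + MT_x P z n.-1 - z n.-1)
           else MT_x P z i.

Definition MT_T (R : realType) (X : normedModType R) (n : nat)
  (P : nat -> X -> X) (z : nat -> X) : nat -> X :=
  fun i => z i + (MT_M n P z i.+1 - MT_M n P z i).

From HB Require Import structures.
From mathcomp Require Import all_boot all_order all_algebra.
From mathcomp Require Import all_classical all_reals all_analysis.
From mathcomp Require Import lra ring zify.
Import Order.TTheory GRing.Theory Num.Theory.
Import numFieldNormedType.Exports.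
Local Open Scope classical_set_scope.
Local Open Scope ring_scope.

(* The relaxed iteration is z_(k+1) = S z_k for the linear map
   S = (1 - lam) Id + lam T on X^(n-1).  Telescoping the orthogonality
   relations of the projections P_i gives
     sum_i |(T z)_i|^2 = sum_i |z_i|^2 - |(M z)_1 - (M z)_n|^2,
   so T is nonexpansive and S is averaged:
     |S z|^2 + (1 - lam)/lam |z - S z|^2 <= |z|^2.
   For a linear averaged operator the residuals S^k (y - S y) decay like 1/k.
   Writing z_0 = h + g with g the projection of z_0 onto the closure of the
   range of Id - S, h is a fixed point and S^k g -> 0, hence z_k -> h.
   At a fixed point of T all coordinates of M coincide with a point of the
   intersection Z, and P_Z of the sum of the coordinates of z_k does not change
   along the iteration; this identifies the common value as P_Z p. *)

(** * Semi-inner products and averaged linear operators *)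

Lemma quadratic_discriminant_le (R : realFieldType) (a b d : R) : 0 <= b ->
  (forall t, 2 * t * d <= a + t ^+ 2 * b) -> d ^+ 2 <= a * b.
Proof.
move=> b_ge0 H; have [b0|b_neq0] := eqVneq b 0.
  have [->|d0] := eqVneq d 0; first by rewrite b0 expr0n mulr0.
  have := H ((a + 1) / (2 * d)); rewrite b0 mulr0 addr0.
  have -> : 2 * ((a + 1) / (2 * d)) * d = a + 1 by field.
  lra.
have b_gt0 : 0 < b by rewrite lt_neqAle eq_sym b_neq0.
have := H (d / b).
have -> : 2 * (d / b) * d = 2 * (d ^+ 2 / b) by field.
have -> : (d / b) ^+ 2 * b = d ^+ 2 / b by field.
by move=> h; rewrite -ler_pdivrMr //; lra.
Qed.

Lemma sqr_eq0_of_le (R : realFieldType) (x : R) :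
  (forall e, 0 < e -> x ^+ 2 <= e) -> x = 0.
Proof.
move=> H; apply/eqP; rewrite -sqrf_eq0 eq_le sqr_ge0 andbT.
by apply/ler_addgt0Pr => e /H; rewrite add0r.
Qed.

Lemma subr_relax (R : pzRingType) (V : lmodType R) (l : R) (x t : V) :
  x - ((1 - l) *: x + l *: t) = l *: (x - t).
Proof. by rewrite scalerBl scale1r opprD addrA opprB subrKC scalerBr. Qed.

Definition linear_subspace {R : nzRingType} {V : lmodType R} (U : set V) :=
  forall a x y, U x -> U y -> U (a *: x + y).

Lemma linear_subspace_bigcap {R : nzRingType} {V : lmodType R} {I : pred nat} {U : nat -> set V} :
  (forall i, I i -> linear_subspace (U i)) -> linear_subspace [set x | forall i, I i -> U i x].
Proof. by move=> U_sub a x y Ux Uy i Ii; apply: U_sub; [|exact: Ux|exact: Uy]. Qed.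

Lemma mean_const {R : numFieldType} {V : lmodType R} {n : nat} (x : V) :
  (1 < n)%N -> (n.-1)%:R^-1 *: \sum_(1 <= i < n) x = x.
Proof.
move=> n_gt1; rewrite sumr_const_nat -[x *+ _]scaler_nat scalerA subn1.
by rewrite mulVf ?scale1r // pnatr_eq0; lia.
Qed.

Definition dot_cvg {R : realType} {V : lmodType R} (dot : V -> V -> R)
    (u : nat -> V) (l : V) :=
  forall e, 0 < e -> \forall k \near \oo, dot (u k - l) (u k - l) < e.

(* Cauchy sequences are expressed as in [cauchy_ex]. *)
Definition dot_complete {R : realType} {V : lmodType R} (dot : V -> V -> R) :=
  forall u : nat -> V,
    (forall e, 0 < e -> exists l, \forall k \near \oo, dot (u k - l) (u k - l) < e) ->
  exists l, dot_cvg dot u l.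

Section SemiInnerProduct.
Context {R : realType} {V : lmodType R} {dot : V -> V -> R}.
Hypothesis dotC : forall x y, dot x y = dot y x.
Hypothesis dotL : forall a x y z, dot (a *: x + y) z = a * dot x z + dot y z.
Hypothesis dot_ge0 : forall x, 0 <= dot x x.
Local Notation nsq x := (dot x x).

Lemma dot0l z : dot 0 z = 0.
Proof. by have := dotL (-1) 0 0 z; rewrite scaler0 addr0 mulN1r addNr. Qed.
Lemma dotDl x y z : dot (x + y) z = dot x z + dot y z.
Proof. by rewrite -{1}(scale1r x) dotL mul1r. Qed.
Lemma dotZl a x z : dot (a *: x) z = a * dot x z.
Proof. by rewrite -(addr0 (a *: x)) dotL dot0l addr0. Qed.
Lemma dotNl x z : dot (- x) z = - dot x z.
Proof. by rewrite -scaleN1r dotZl mulN1r. Qed.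
Lemma dotBl x y z : dot (x - y) z = dot x z - dot y z.
Proof. by rewrite dotDl dotNl. Qed.
Lemma dotDr x y z : dot z (x + y) = dot z x + dot z y.
Proof. by rewrite dotC dotDl !(dotC z). Qed.
Lemma dotZr a x z : dot z (a *: x) = a * dot z x.
Proof. by rewrite dotC dotZl dotC. Qed.
Lemma dotBr x y z : dot z (x - y) = dot z x - dot z y.
Proof. by rewrite dotC dotBl !(dotC z). Qed.

Lemma nsqD x y : nsq (x + y) = nsq x + 2 * dot x y + nsq y.
Proof. rewrite !dotDl !dotDr (dotC y x); lra. Qed.
Lemma nsqB x y : nsq (x - y) = nsq x - 2 * dot x y + nsq y.
Proof. rewrite !dotBl !dotBr (dotC y x); lra. Qed.
Lemma nsqZ a x : nsq (a *: x) = a ^+ 2 * nsq x.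
Proof. by rewrite dotZl dotZr mulrA -expr2. Qed.
Lemma nsqN x : nsq (- x) = nsq x.
Proof. by rewrite -scaleN1r nsqZ sqrrN expr1n mul1r. Qed.

Lemma nsqD_le x y : nsq (x + y) <= 2 * nsq x + 2 * nsq y.
Proof. have := dot_ge0 (x - y); rewrite nsqB nsqD; lra. Qed.

Lemma parallelogram x y : nsq (x + y) + nsq (x - y) = 2 * nsq x + 2 * nsq y.
Proof. rewrite nsqD nsqB; lra. Qed.

Lemma nsq_convex l x y :
  nsq ((1 - l) *: x + l *: y) = (1 - l) * nsq x + l * nsq y - l * (1 - l) * nsq (x - y).
Proof. rewrite nsqD !nsqZ dotZl dotZr nsqB; ring. Qed.

Lemma nsqDB_orth a b c q : dot (c + q - a - b) b = 0 ->
  nsq (a + (b - c)) - nsq a = (2 * dot q b - nsq b) - (2 * dot a c - nsq c).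
Proof.
rewrite !(dotDl, dotBl, dotDr, dotBr) => orth.
have := dotC a b; have := dotC a c; have := dotC b c; lra.
Qed.

Lemma nsq_relax l x t : l != 0 ->
  nsq ((1 - l) *: x + l *: t) + (1 - l) / l * nsq (x - ((1 - l) *: x + l *: t))
    = (1 - l) * nsq x + l * nsq t.
Proof.
by move=> l_neq0; rewrite subr_relax nsq_convex nsqZ; field.
Qed.

Lemma dot_sqr_le x y : dot x y ^+ 2 <= nsq x * nsq y.
Proof.
apply: quadratic_discriminant_le => // t.
by have := dot_ge0 (x - t *: y); rewrite nsqB nsqZ dotZr; lra.
Qed.

Lemma dot_null x y : nsq x = 0 -> dot x y = 0.
Proof.
move=> x0; apply/eqP; rewrite -sqrf_eq0 eq_le sqr_ge0 andbT.
by have := dot_sqr_le x y; rewrite x0 mul0r.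
Qed.

Lemma nsqD_null x y : nsq x = 0 -> nsq (x + y) = nsq y.
Proof. by move=> x0; rewrite nsqD x0 dot_null // mulr0 !add0r. Qed.

Hypothesis complete_dot : dot_complete dot.

Section OrthogonalDecomposition.
Variable W : set V.
Hypothesis W0 : W 0.
Hypothesis W_sub : linear_subspace W.

Let WDD {x y} : W x -> W y -> W (x + y).
Proof. by move=> Wx Wy; rewrite -[x]scale1r; apply: W_sub. Qed.

Let WZ a {x} : W x -> W (a *: x).
Proof. by move=> Wx; rewrite -[_ *: x]addr0; apply: W_sub. Qed.

Let dist2 z := inf [set nsq (z - w) | w in W].

Let dist2_lbound z : has_lbound [set nsq (z - w) | w in W].
Proof. by exists 0 => _ [w _ <-]. Qed.

Let dist2_le {z w} : W w -> dist2 z <= nsq (z - w).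
Proof. by move=> Ww; apply: (ge_inf (dist2_lbound z)); exists w. Qed.

Let exists_minimizing z : exists w : nat -> V,
  (forall j, W (w j)) /\ forall j, nsq (z - w j) < dist2 z + j.+1%:R^-1.
Proof.
have hE : has_inf [set nsq (z - w) | w in W].
  by split; [exists (nsq (z - 0)); exists 0 | exact: dist2_lbound].
suff /choice[w hw] : forall j : nat, exists w, W w /\ nsq (z - w) < dist2 z + j.+1%:R^-1.
  by exists w; split => j; have [] := hw j.
move=> j; have j_gt0 : 0 < j.+1%:R^-1 :> R by rewrite invr_gt0 ltr0Sn.
have [_ [w Ww <-]] := inf_adherent j_gt0 hE.
by exists w.
Qed.

Section Minimizing.
Context {z : V} {w : nat -> V}.
Hypothesis Ww : forall j, W (w j).
Hypothesis w_min : forall j, nsq (z - w j) < dist2 z + j.+1%:R^-1.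

(* Parallelogram law: the midpoint of w j and w m lies in W, hence is at
   least as far from z. *)
Let minimizing_cauchy j m :
  nsq (w j - w m) <= 2 * j.+1%:R^-1 + 2 * m.+1%:R^-1.
Proof.
have mid : (z - w j) + (z - w m) = 2 *: (z - 2^-1 *: (w j + w m)).
  rewrite scalerBr scalerA mulfV ?pnatr_eq0 // scale1r -[2]/(1 + 1) scalerDl scale1r.
  by rewrite opprD addrACA.
have dif : (z - w j) - (z - w m) = - (w j - w m).
  by rewrite !opprB addrC addrA subrK.
have par : 4 * nsq (z - 2^-1 *: (w j + w m)) + nsq (w j - w m)
    = 2 * nsq (z - w j) + 2 * nsq (z - w m).
  by rewrite -parallelogram mid dif nsqZ nsqN -natrX.
have := @dist2_le z _ (WZ 2^-1 (WDD (Ww j) (Ww m))).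
have := w_min j; have := w_min m.
set a := j.+1%:R^-1; set b := m.+1%:R^-1; lra.
Qed.

Lemma minimizing_orth u j : W u -> dot (z - w j) u ^+ 2 <= j.+1%:R^-1 * nsq u.
Proof.
move=> Wu; apply: quadratic_discriminant_le => // t.
have := @dist2_le z _ (WDD (Ww j) (WZ t Wu)).
rewrite opprD addrA nsqB dotZr nsqZ -mulrA; have := w_min j.
set a := j.+1%:R^-1; lra.
Qed.

Lemma minimizing_cvg : exists g, dot_cvg dot w g.
Proof.
apply: complete_dot => e e_gt0.
have e4_gt0 : 0 < e / 4 by rewrite divr_gt0.
have [K _ HK] := near_infty_natSinv_lt (PosNum e4_gt0).
exists (w K); exists K => // k /= Kk.
have := minimizing_cauchy k K; have := HK k Kk; have := HK K (leqnn K); rewrite /=.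
set a := k.+1%:R^-1; set b := K.+1%:R^-1; lra.
Qed.

End Minimizing.

Lemma orthogonal_decomposition z : exists g,
  (exists2 w : nat -> V, (forall j, W (w j)) & dot_cvg dot w g) /\
  (forall u, W u -> dot (z - g) u = 0).
Proof.
have [w [Ww w_min]] := exists_minimizing z.
have [g wg] := minimizing_cvg Ww w_min.
exists g; split; first by exists w.
move=> u Wu; apply: sqr_eq0_of_le => e e_gt0.
set s := nsq u + 1; have s_gt0 : 0 < s by have := dot_ge0 u; rewrite /s; lra.
have q_gt0 : 0 < e / (4 * s) by rewrite divr_gt0 // mulr_gt0.
have [j [j_lt wj_lt]] := filter_ex (filterI (near_infty_natSinv_lt (PosNum q_gt0)) (wg _ q_gt0)).
have -> : z - g = (z - w j) + (w j - g) by rewrite addrA subrK.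
rewrite dotDl.
have hq : e / (4 * s) * s = e / 4 by field; apply: lt0r_neq0.
have hA := minimizing_orth Ww w_min u j Wu.
have hB := dot_sqr_le (w j - g) u.
rewrite /= in j_lt.
have hA' : j.+1%:R^-1 * nsq u <= e / 4.
  rewrite -hq; apply: ler_pM;
    [by rewrite invr_ge0 | exact: dot_ge0 | exact: ltW | by rewrite lerDl].
have hB' : nsq (w j - g) * nsq u <= e / 4.
  rewrite -hq; apply: ler_pM; [exact: dot_ge0 | exact: dot_ge0 | exact: ltW | by rewrite lerDl].
set A := dot (z - w j) u in hA *; set B := dot (w j - g) u in hB *.
have hAB : (A + B) ^+ 2 <= 2 * A ^+ 2 + 2 * B ^+ 2.
  by have := sqr_ge0 (A - B); rewrite sqrrB sqrrD; lra.
have := le_trans hA hA'; have := le_trans hB hB'; lra.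
Qed.

End OrthogonalDecomposition.

Section AveragedOperator.
Variable S : {linear V -> V}.
Variable c : R.
Hypothesis c_gt0 : 0 < c.
Hypothesis S_avg : forall x, nsq (S x) + c * nsq (x - S x) <= nsq x.

Lemma nsq_S_le x : nsq (S x) <= nsq x.
Proof. by have := S_avg x; have := mulr_ge0 (ltW c_gt0) (dot_ge0 (x - S x)); lra. Qed.

Lemma iter_linearD k x y : iter k S (x + y) = iter k S x + iter k S y.
Proof. by elim: k => //= k ->; rewrite linearD. Qed.

Lemma iter_linearB k x y : iter k S (x - y) = iter k S x - iter k S y.
Proof. by elim: k => //= k ->; rewrite linearB. Qed.

Lemma nsq_iter_le k x : nsq (iter k S x) <= nsq x.
Proof. by elim: k => //= k; apply: le_trans (nsq_S_le _). Qed.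

Lemma nsq_iter_null k x : nsq x = 0 -> nsq (iter k S x) = 0.
Proof. by move=> x0; apply/eqP; rewrite eq_le dot_ge0 andbT -x0 nsq_iter_le. Qed.

(* Each step pays c times the current residual out of nsq, and the residuals
   do not grow along the orbit. *)
Lemma residual_decay y k :
  c * k.+1%:R * nsq (iter k S (y - S y)) + nsq (iter k.+1 S y) <= nsq y.
Proof.
have iter_res j : iter j S (y - S y) = iter j S y - iter j.+1 S y by rewrite iter_linearB iterSr.
elim: k => [|k IHk]; first by rewrite /= mulr1 addrC S_avg.
have step := S_avg (iter k.+1 S y); rewrite -iter_res in step.
have mono : nsq (iter k.+1 S (y - S y)) <= nsq (iter k S (y - S y)) by exact: nsq_S_le.
have ck_ge0 : 0 <= c * k.+1%:R by rewrite mulr_ge0 // ltW.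
have := ler_wpM2l ck_ge0 mono; rewrite -[k.+2%:R]natr1 /= in step IHk *; lra.
Qed.

Lemma iter_residual_cvg0 y : dot_cvg dot (fun k => iter k S (y - S y)) 0.
Proof.
move=> e e_gt0; have ny := dot_ge0 y.
have q_gt0 : 0 < e * c / (nsq y + 1) by rewrite divr_gt0 ?mulr_gt0 //; lra.
near=> k; rewrite subr0.
have hk : k.+1%:R^-1 < e * c / (nsq y + 1).
  by near: k; exact: (near_infty_natSinv_lt (PosNum q_gt0)).
have := residual_decay y k; have := dot_ge0 (iter k.+1 S y).
set a := nsq (iter k S _); have a_ge0 : 0 <= a := dot_ge0 _.
rewrite ltr_pdivlMr ?ltr_pdivrMl ?ltr0Sn in hk; last lra.
move=> Sy_ge0 decay; rewrite ltNge; apply/negP => ea.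
have := ler_wpM2l (mulr_ge0 (ltW c_gt0) (ler0n R k.+1)) ea; nra.
Unshelve. all: by end_near.
Qed.

Lemma iter_cvg0_of_residual_limit {g} :
  (exists2 w : nat -> V, (forall j, range (fun y => y - S y) (w j)) & dot_cvg dot w g) ->
  dot_cvg dot (fun k => iter k S g) 0.
Proof.
move=> [w Ww wg] e e_gt0; have e4_gt0 : 0 < e / 4 by rewrite divr_gt0.
have [j wj_lt] := filter_ex (wg _ e4_gt0); have [y _ wjE] := Ww j.
apply: filterS (iter_residual_cvg0 y _ e4_gt0) => k; rewrite !subr0 wjE => hk.
rewrite -[g](subKr (w j)) iter_linearB.
have := nsqD_le (iter k S (w j)) (- iter k S (w j - g)).
have := nsq_iter_le k (w j - g); rewrite nsqN /= in wj_lt *; lra.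
Qed.

Lemma fixed_of_orth_residuals h : (forall y, dot h (y - S y) = 0) -> nsq (h - S h) = 0.
Proof.
move=> /(_ h); rewrite dotBr => orth.
have := nsq_S_le h; have := dot_ge0 (h - S h); rewrite nsqB; lra.
Qed.

Lemma iter_null_orbit u : (forall k, nsq (u k.+1 - S (u k)) = 0) ->
  forall k, nsq (u k - iter k S (u 0%N)) = 0.
Proof.
move=> u_orbit; elim=> [|k IHk]; first by rewrite subrr dot0l.
have -> : u k.+1 - iter k.+1 S (u 0%N) = (u k.+1 - S (u k)) + iter 1 S (u k - iter k S (u 0%N)).
  by rewrite /= linearB addrA subrK.
by rewrite nsqD_null // nsq_iter_null.
Qed.

Lemma iter_null_fixed h : nsq (h - S h) = 0 -> forall k, nsq (iter k S h - h) = 0.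
Proof.
move=> h_fix; elim=> [|k IHk]; first by rewrite subrr dot0l.
have -> : iter k.+1 S h - h = iter 1 S (iter k S h - h) - (h - S h).
  by rewrite /= linearB opprB addrA subrK.
by rewrite nsqD_null ?nsqN // nsq_iter_null.
Qed.

(* u 0 = h + g, where g is the projection of u 0 onto the closure of the range
   of Id - S: then h is fixed and the iterates of g vanish. *)
Theorem averaged_iter_cvg u : (forall k, nsq (u k.+1 - S (u k)) = 0) ->
  exists h, nsq (h - S h) = 0 /\ dot_cvg dot u h.
Proof.
move=> u_orbit.
pose W := range (fun y => y - S y).
have W0 : W 0 by exists 0; rewrite // linear0 subr0.
have W_sub : linear_subspace W.
  move=> a _ _ [x _ <-] [y _ <-]; exists (a *: x + y) => //.
  by rewrite linearP scalerBr addrACA opprD.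
have [g [g_lim g_orth]] := orthogonal_decomposition W W0 W_sub (u 0%N).
have h_fix : nsq ((u 0%N - g) - S (u 0%N - g)) = 0.
  by apply: fixed_of_orth_residuals => y; apply: g_orth; exists y.
exists (u 0%N - g); split => // e e_gt0.
apply: filterS (iter_cvg0_of_residual_limit g_lim _ e_gt0) => k.
have -> : u k - (u 0%N - g)
    = (u k - iter k S (u 0%N)) + ((iter k S (u 0%N - g) - (u 0%N - g)) + iter k S g).
  by rewrite [_ + iter k S g]addrAC -iter_linearD subrK addrA subrK.
by rewrite subr0 nsqD_null ?iter_null_orbit // nsqD_null ?iter_null_fixed.
Qed.

End AveragedOperator.

End SemiInnerProduct.

(** * Orthogonal projections *)

Section OrthogonalProjection.
Context {R : realType} {X : normedModType R} {ip : X -> X -> R}.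
Hypothesis ip_inner : is_inner_product ip.
Let ipC := ip_inner.1.
Let ipL := ip_inner.2.1.
Let ipN := ip_inner.2.2.
Let ipBl := dotBl ipL.

Lemma ip_ge0 x : 0 <= ip x x.
Proof. by rewrite ipN sqr_ge0. Qed.

Lemma ip_eq0 x : ip x x = 0 -> x = 0.
Proof. by rewrite ipN => /eqP; rewrite sqrf_eq0 normr_eq0 => /eqP. Qed.

Lemma ip_ltr_sqr x e : 0 <= e -> (ip x x < e ^+ 2) = (`|x| < e).
Proof. by move=> e_ge0; rewrite ipN ltr_sqr ?nnegrE. Qed.

Context {U : set X} {P : X -> X}.
Hypothesis U_sub : linear_subspace U.
Hypothesis P_orth : is_orth_proj ip U P.

Let U_subB x y : U x -> U y -> U (x - y).
Proof. by move=> Ux Uy; rewrite addrC -scaleN1r; apply: (U_sub _ _ _ Uy Ux). Qed.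

Lemma proj_in x : U (P x).
Proof. exact: (P_orth x).1. Qed.

Lemma proj_ip x u : U u -> ip (P x) u = ip x u.
Proof. by move=> Uu; apply/eqP; rewrite eq_sym -subr_eq0 -ipBl (P_orth x).2. Qed.

Lemma proj_linear a x y : P (a *: x + y) = a *: P x + P y.
Proof.
set d := P (a *: x + y) - (a *: P x + P y).
have Ud : U d by apply: U_subB; [exact: proj_in | apply: U_sub; exact: proj_in].
apply/eqP; rewrite -subr_eq0 -/d; apply/eqP/ip_eq0.
by rewrite {1}/d ipBl ipL !proj_ip // -ipL subrr.
Qed.

Lemma proj0 : P 0 = 0.
Proof. by have := proj_linear (-1) 0 0; rewrite scaler0 addr0 scaleN1r addNr. Qed.

Lemma projD x y : P (x + y) = P x + P y.
Proof. by rewrite -[x]scale1r proj_linear !scale1r. Qed.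

Lemma projZ a x : P (a *: x) = a *: P x.
Proof. by rewrite -[a *: x]addr0 proj_linear proj0 addr0. Qed.

Lemma projB x y : P (x - y) = P x - P y.
Proof. by rewrite -scaleN1r addrC proj_linear scaleN1r addrC. Qed.

Lemma proj_id x : U x -> P x = x.
Proof.
move=> Ux; apply/eqP; rewrite -subr_eq0; apply/eqP/ip_eq0.
by rewrite ipBl !proj_ip ?subrr //; apply: U_subB => //; exact: proj_in.
Qed.

Lemma proj_eq0 w : (forall u, U u -> ip w u = 0) -> P w = 0.
Proof. by move=> w_orth; apply: ip_eq0; rewrite proj_ip ?w_orth //; exact: proj_in. Qed.

Lemma proj_norm_le x : `|P x| <= `|x|.
Proof.
have pyth : ip x x = ip (x - P x) (x - P x) + ip (P x) (P x).
  rewrite -{1 2}(subrK (P x) x) (nsqD ipC ipL) ((P_orth x).2 (P x)) ?mulr0 ?addr0 //.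
  exact: proj_in.
by rewrite -ler_sqr ?nnegrE // -!ipN pyth lerDr ip_ge0.
Qed.

Lemma orth_proj_continuous : continuous P.
Proof.
move=> x; apply/cvgrPdist_lt => e e_gt0; near=> y.
by rewrite -projB (le_lt_trans (proj_norm_le _)) //; near: y; apply: cvgr_dist_lt.
Unshelve. all: by end_near.
Qed.

End OrthogonalProjection.

Lemma proj_comp_sub {R : realType} {X : normedModType R} {ip : X -> X -> R}
    {U W : set X} {P Q : X -> X} :
  is_inner_product ip -> linear_subspace W -> is_orth_proj ip U P -> is_orth_proj ip W Q ->
  W `<=` U -> forall x, Q (P x) = Q x.
Proof.
move=> ip_inner W_sub P_orth Q_orth WU x.
have : Q (x - P x) = 0 by apply: (proj_eq0 ip_inner Q_orth) => u /WU; exact: (P_orth x).2.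
by rewrite (projB ip_inner W_sub Q_orth) => /eqP; rewrite subr_eq0 => /eqP.
Qed.

(** * The Malitsky-Tam operator *)

Lemma scalerDB_comb (R : nzRingType) (V : lmodType R) (a : R) (p q r p' q' r' : V) :
  (a *: p + p') + (a *: q + q') - (a *: r + r') = a *: (p + q - r) + (p' + q' - r').
Proof.
rewrite scalerBr scalerDr opprD (addrACA (a *: p) p' (a *: q) q').
by rewrite (addrACA (a *: p + a *: q)).
Qed.

Section MalitskyTam.
Context {R : realType} {X : completeNormedModType R} {ip : X -> X -> R}.
Hypothesis ip_inner : is_inner_product ip.
Context {n : nat} {U : nat -> set X} {P : nat -> X -> X}.
Hypothesis n_gt1 : (1 < n)%N.
Hypothesis U_sub : forall i, (1 <= i <= n)%N -> linear_subspace (U i).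
Hypothesis P_orth : forall i, (1 <= i <= n)%N -> is_orth_proj ip (U i) (P i).

Let ipC := ip_inner.1.
Let ipL := ip_inner.2.1.
Local Notation M := (MT_M n P).
Local Notation T := (MT_T n P).

Lemma MT_M_x z i : i != n -> M z i = MT_x P z i.
Proof. by rewrite /MT_M => /negbTE ->. Qed.

Lemma MT_M_n z : M z n = P n (MT_x P z 1 + MT_x P z n.-1 - z n.-1).
Proof. by rewrite /MT_M eqxx. Qed.

Lemma MT_xSS z i : MT_x P z i.+2 = P i.+2 (MT_x P z i.+1 + z i.+2 - z i.+1).
Proof. by []. Qed.

Let P_linear i a x y : (1 <= i <= n)%N -> P i (a *: x + y) = a *: P i x + P i y.
Proof. by move=> i_n; rewrite (proj_linear ip_inner (U_sub _ i_n) (P_orth _ i_n)). Qed.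

Let P_in i x : (1 <= i <= n)%N -> U i (P i x).
Proof. by move=> i_n; exact: (proj_in (P_orth _ i_n)). Qed.

Lemma MT_x_linear a z w i : (i < n)%N ->
  MT_x P (a *: z + w) i = a *: MT_x P z i + MT_x P w i.
Proof.
elim: i => [|[|i] IHi] i_n; first by rewrite /= scaler0 addr0.
  by rewrite /= P_linear //; lia.
by rewrite !MT_xSS IHi ?fctE ?scalerDB_comb ?P_linear //; lia.
Qed.

Lemma MT_M_linear a z w i : (1 <= i <= n)%N -> M (a *: z + w) i = a *: M z i + M w i.
Proof.
move=> i_n; have [->|i_neq_n] := eqVneq i n.
  by rewrite !MT_M_n !MT_x_linear ?scalerDB_comb ?P_linear //; lia.
by rewrite !MT_M_x // MT_x_linear //; lia.
Qed.

Lemma MT_T_linear a z w i : (1 <= i < n)%N -> T (a *: z + w) i = a *: T z i + T w i.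
Proof.
move=> i_n; rewrite /MT_T !MT_M_linear; try lia.
by rewrite !fctE addrA scalerDB_comb !addrA.
Qed.

Lemma MT_M_in z i : (1 <= i <= n)%N -> U i (M z i).
Proof.
move=> i_n; have [->|i_neq_n] := eqVneq i n; first by rewrite MT_M_n; apply: P_in; lia.
by rewrite MT_M_x //; case: i i_n {i_neq_n} => [|[|i]] i_n //=; exact: P_in _ _ i_n.
Qed.

Lemma MT_orth_first z : ip (z 1%N - M z 1) (M z 1) = 0.
Proof.
have one_n : (1 <= 1 <= n)%N by lia.
rewrite MT_M_x; last lia.
by apply: (P_orth _ one_n _).2; apply: P_in.
Qed.

Lemma MT_orth_next z i : (i.+2 < n)%N ->
  ip (M z i.+1 + z i.+2 - z i.+1 - M z i.+2) (M z i.+2) = 0.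
Proof.
move=> i_n; have i_n' : (1 <= i.+2 <= n)%N by lia.
rewrite !MT_M_x; try lia.
by apply: (P_orth _ i_n' _).2; apply: P_in.
Qed.

Lemma MT_orth_last z : ip (M z n.-1 + M z 1 - z n.-1 - M z n) (M z n) = 0.
Proof.
have n_n : (1 <= n <= n)%N by lia.
rewrite MT_M_n !MT_M_x; try lia.
by rewrite (addrC (MT_x P z n.-1)); apply: (P_orth _ n_n _).2; apply: P_in.
Qed.

(* Summing the per-step identities telescopes; only the mismatch between the
   first and the last coordinate of M z survives. *)
Lemma MT_T_nsq_sum z : \sum_(1 <= i < n) ip (T z i) (T z i)
  = \sum_(1 <= i < n) ip (z i) (z i) - ip (M z 1 - M z n) (M z 1 - M z n).
Proof.
pose phi i := 2 * ip (z i) (M z i) - ip (M z i) (M z i).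
have step i : (1 <= i)%N -> (i.+1 < n)%N ->
    ip (T z i) (T z i) - ip (z i) (z i) = phi i.+1 - phi i.
  by case: i => [//|i] _ i_n; apply: (nsqDB_orth ipC ipL); exact: MT_orth_next.
have last : ip (T z n.-1) (T z n.-1) - ip (z n.-1) (z n.-1)
    = (2 * ip (M z 1) (M z n) - ip (M z n) (M z n)) - phi n.-1.
  by rewrite /MT_T prednK; [apply: (nsqDB_orth ipC ipL); exact: MT_orth_last | lia].
have first : phi 1%N = ip (M z 1) (M z 1).
  by have := MT_orth_first z; rewrite (dotBl ipL) /phi; lra.
have split_last (F : nat -> R) : \sum_(1 <= i < n) F i = \sum_(1 <= i < n.-1) F i + F n.-1.
  by rewrite -{1}(prednK (ltnW n_gt1)) big_nat_recr //; lia.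
have -> : \sum_(1 <= i < n) ip (T z i) (T z i) = \sum_(1 <= i < n) ip (z i) (z i)
    + \sum_(1 <= i < n) (ip (T z i) (T z i) - ip (z i) (z i)) by rewrite sumrB addrC subrK.
congr (_ + _); rewrite split_last last (eq_big_nat _ _ (fun i i_n => step i _ _)); try lia.
rewrite telescope_sumr; last lia.
rewrite (nsqB ipC ipL) first; lra.
Qed.

(* Only the coordinates 1 .. n-1 count, so on nat -> X this is merely a
   semi-inner product. *)
Definition prod_ip (w w' : nat -> X) : R := \sum_(1 <= i < n) ip (w i) (w' i).

Lemma prod_ipC w w' : prod_ip w w' = prod_ip w' w.
Proof. by apply: eq_bigr => i _; rewrite ipC. Qed.

Lemma prod_ipL a w w' w'' : prod_ip (a *: w + w') w'' = a * prod_ip w w'' + prod_ip w' w''.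
Proof. by rewrite /prod_ip mulr_sumr -big_split; apply: eq_bigr => i _; exact: ipL. Qed.

Lemma prod_ip_ge0 w : 0 <= prod_ip w w.
Proof. by apply: sumr_ge0 => i _; exact: ip_ge0. Qed.

Lemma ip_le_prod_ip w i : (1 <= i < n)%N -> ip (w i) (w i) <= prod_ip w w.
Proof.
move=> i_n; rewrite /prod_ip (bigD1_seq i) ?mem_index_iota ?iota_uniq //=.
by rewrite lerDl; apply: sumr_ge0 => j _; exact: ip_ge0.
Qed.

Lemma prod_ip_complete : dot_complete prod_ip.
Proof.
move=> u u_cauchy.
have coord_cvg i : (1 <= i < n)%N -> cvg ((fun k => u k i) @ \oo).
  move=> i_n; apply: cauchy_cvg; apply: cauchy_exP => eps eps_gt0.
  have [l ul] := u_cauchy _ (exprn_gt0 2 eps_gt0); exists (l i).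
  apply: filterS ul => k /(le_lt_trans (ip_le_prod_ip _ _ i_n)).
  by rewrite -ball_normE /= -normrN opprB fctE (ip_ltr_sqr ip_inner) // ltW.
exists (fun i => lim ((fun k => u k i) @ \oo)) => e e_gt0.
set d := e / n%:R; have d_gt0 : 0 < d by rewrite divr_gt0 // ltr0n; lia.
have : \forall k \near \oo, forall i : 'I_n, (1 <= i)%N ->
    ip (u k i - lim ((fun k => u k i) @ \oo)) (u k i - lim ((fun k => u k i) @ \oo)) < d.
  apply: filter_forall => i; have [i_pos|i0] := ltnP 0 i; last by apply: nearW; lia.
  have sd_gt0 : 0 < Num.sqrt d by rewrite sqrtr_gt0.
  have i_n : (1 <= i < n)%N by rewrite i_pos ltn_ord.
  have /cvgrPdist_lt /(_ _ sd_gt0) := coord_cvg i i_n.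
  apply: filterS => k.
  by rewrite -normrN opprB -(ip_ltr_sqr ip_inner) ?sqr_sqrtr ?sqrtr_ge0 // ltW.
apply: filterS => k uk_near.
have e_eq : e = d *+ n by rewrite -mulr_natr divfK // pnatr_eq0; lia.
apply: (@le_lt_trans _ _ (\sum_(1 <= i < n) d)).
  apply: ler_sum_nat => i /andP [i_pos i_n]; rewrite fctE.
  exact: ltW (uk_near (Ordinal i_n) i_pos).
by rewrite sumr_const_nat e_eq ltr_pMn2l //; lia.
Qed.

(* Coordinates outside 1 .. n-1 are set to 0, where T has no meaning, so that
   the map is linear. *)
Definition MT_relax (lam : R) (z : nat -> X) : nat -> X :=
  fun i => if (1 <= i < n)%N then (1 - lam) *: z i + lam *: T z i else 0.

Lemma MT_relax_is_linear lam : linear (MT_relax lam).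
Proof.
move=> a z w; apply/funext => i; rewrite /MT_relax !fctE.
case: ifP => i_n; last by rewrite scaler0 addr0.
rewrite MT_T_linear // !scalerDr !scalerA addrACA.
by rewrite (mulrC a) (mulrC a lam).
Qed.

HB.instance Definition _ lam :=
  GRing.isLinear.Build R (nat -> X) (nat -> X) _ (MT_relax lam) (MT_relax_is_linear lam).

Lemma MT_relax_averaged lam : 0 < lam -> forall z,
  prod_ip (MT_relax lam z) (MT_relax lam z)
    + (1 - lam) / lam * prod_ip (z - MT_relax lam z) (z - MT_relax lam z) <= prod_ip z z.
Proof.
move=> lam_gt0 z; rewrite /prod_ip mulr_sumr -big_split /=.
have coord i : (1 <= i < n)%N ->
    ip (MT_relax lam z i) (MT_relax lam z i)
      + (1 - lam) / lam * ip ((z - MT_relax lam z) i) ((z - MT_relax lam z) i)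
    = (1 - lam) * ip (z i) (z i) + lam * ip (T z i) (T z i).
  by move=> i_n; rewrite !fctE /= /MT_relax i_n (nsq_relax ipC ipL) // gt_eqF.
rewrite (eq_big_nat _ _ coord) big_split /= -!mulr_sumr.
have T_le : \sum_(1 <= i < n) ip (T z i) (T z i) <= \sum_(1 <= i < n) ip (z i) (z i).
  by rewrite MT_T_nsq_sum gerBl ip_ge0.
have := ler_wpM2l (ltW lam_gt0) T_le; lra.
Qed.

Lemma MT_M_cvg {zk : nat -> nat -> X} {z : nat -> X} :
  (forall i, (1 <= i < n)%N -> (fun k => zk k i) @ \oo --> z i) ->
  forall i, (1 <= i <= n)%N -> (fun k => M (zk k) i) @ \oo --> M z i.
Proof.
move=> zk_cvg.
have P_cvg i (f : nat -> X) l : (1 <= i <= n)%N ->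
    f @ \oo --> l -> (fun k => P i (f k)) @ \oo --> P i l.
  move=> i_n; apply: continuous_cvg.
  exact: (orth_proj_continuous ip_inner (U_sub _ i_n) (P_orth _ i_n)).
have x_cvg i : (i < n)%N -> (fun k => MT_x P (zk k) i) @ \oo --> MT_x P z i.
  elim: i => [|[|i] IHi] i_n; first exact: cvg_cst.
    by apply: P_cvg; [lia | apply: zk_cvg; lia].
  apply: P_cvg; first lia.
  by apply: cvgB; [apply: cvgD; [apply: IHi | apply: zk_cvg] | apply: zk_cvg]; lia.
move=> i i_n; have [->|i_neq_n] := eqVneq i n; last first.
  by under eq_fun do rewrite MT_M_x //; rewrite MT_M_x //; apply: x_cvg; lia.
under eq_fun do rewrite MT_M_n; rewrite MT_M_n.
by apply: P_cvg; [lia | apply: cvgB; [apply: cvgD; apply: x_cvg | apply: zk_cvg]]; lia.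
Qed.

Lemma MT_fixed_M_const z : (forall i, (1 <= i < n)%N -> T z i = z i) ->
  forall i, (1 <= i <= n)%N -> M z i = M z 1.
Proof.
move=> z_fix; elim=> [//|[//|i] IHi] i_n.
have /addrI/eqP : z i.+1 + (M z i.+2 - M z i.+1) = z i.+1 + 0.
  by rewrite addr0; apply: z_fix; lia.
by rewrite subr_eq0 => /eqP ->; apply: IHi; lia.
Qed.

Context {PZ : X -> X}.
Hypothesis PZ_orth : is_orth_proj ip [set x | forall i, (1 <= i <= n)%N -> U i x] PZ.

Let Z_sub := linear_subspace_bigcap U_sub.

Let PZD := projD ip_inner Z_sub PZ_orth.
Let PZB := projB ip_inner Z_sub PZ_orth.
Let PZZ := projZ ip_inner Z_sub PZ_orth.

Let PZ_P i y : (1 <= i <= n)%N -> PZ (P i y) = PZ y.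
Proof.
by move=> i_n; rewrite (proj_comp_sub ip_inner Z_sub (P_orth _ i_n) PZ_orth (fun x Zx => Zx i i_n)).
Qed.

Lemma PZ_MT_x z i : (1 <= i < n)%N -> PZ (MT_x P z i) = PZ (z i).
Proof.
elim: i => [//|[|i] IHi] i_n; first by rewrite /= PZ_P //; lia.
rewrite MT_xSS PZ_P ?PZB ?PZD ?IHi; try lia.
by rewrite addrAC subrr add0r.
Qed.

Lemma PZ_MT_M_n z : PZ (M z n) = PZ (M z 1).
Proof.
rewrite MT_M_n PZ_P ?PZB ?PZD ?(PZ_MT_x z n.-1) ?addrK ?MT_M_x //; lia.
Qed.

Lemma PZ_sum_MT_T z : PZ (\sum_(1 <= i < n) T z i) = PZ (\sum_(1 <= i < n) z i).
Proof.
rewrite /MT_T big_split /= telescope_sumr; last lia.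
by rewrite PZD PZB PZ_MT_M_n subrr addr0.
Qed.

Lemma MT_fixed_M_eq {z : nat -> X} : (forall i, (1 <= i < n)%N -> T z i = z i) ->
  forall i, (1 <= i <= n)%N -> M z i = (n.-1)%:R^-1 *: PZ (\sum_(1 <= i < n) z i).
Proof.
move=> z_fix i i_n; rewrite MT_fixed_M_const //.
have PZ_M1 : PZ (M z 1) = M z 1.
  apply: (proj_id ip_inner Z_sub PZ_orth) => j j_n; rewrite -(MT_fixed_M_const z z_fix _ j_n).
  exact: MT_M_in.
rewrite (big_morph PZ PZD (proj0 ip_inner Z_sub PZ_orth)).
rewrite (eq_big_nat _ _ (_ : forall j, (1 <= j < n)%N -> PZ (z j) = M z 1)).
  by rewrite mean_const.
move=> j j_n; rewrite -PZ_MT_x // -MT_M_x; last lia.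
by rewrite MT_fixed_M_const ?PZ_M1 //; lia.
Qed.

Section Iterates.
Context {lam : R} {zs : nat -> nat -> X}.
Hypothesis lam_gt0 : 0 < lam.
Hypothesis lam_lt1 : lam < 1.
Hypothesis zs_step : forall k i, (1 <= i < n)%N ->
  zs k.+1 i = (1 - lam) *: zs k i + lam *: T (zs k) i.

Lemma MT_iterates_cvg : exists zbar,
  (forall i, (1 <= i < n)%N -> (fun k => zs k i) @ \oo --> zbar i) /\
  (forall i, (1 <= i < n)%N -> T zbar i = zbar i).
Proof.
have c_gt0 : 0 < (1 - lam) / lam by rewrite divr_gt0 // subr_gt0.
have zs_orbit k : prod_ip (zs k.+1 - MT_relax lam (zs k)) (zs k.+1 - MT_relax lam (zs k)) = 0.
  rewrite /prod_ip big_nat big1 // => i i_n.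
  by rewrite !fctE /= /MT_relax i_n zs_step // subrr (dot0l ipL).
have [h [h_fix h_cvg]] := averaged_iter_cvg prod_ipC prod_ipL prod_ip_ge0 prod_ip_complete
  _ _ c_gt0 (MT_relax_averaged _ lam_gt0) _ zs_orbit.
exists h; split => i i_n.
  apply/cvgrPdist_lt => e e_gt0; apply: filterS (h_cvg _ (exprn_gt0 2 e_gt0)) => k.
  move=> /(le_lt_trans (ip_le_prod_ip _ _ i_n)).
  by rewrite -normrN opprB -(ip_ltr_sqr ip_inner) ?ltW.
have := ip_le_prod_ip (h - MT_relax lam h) _ i_n; rewrite h_fix !fctE /= /MT_relax i_n.
move=> le0; have /(ip_eq0 ip_inner) : ip (h i - ((1 - lam) *: h i + lam *: T h i))
    (h i - ((1 - lam) *: h i + lam *: T h i)) = 0 by apply/le_anti; rewrite le0 ip_ge0.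
by rewrite subr_relax => /eqP; rewrite scaler_eq0 gt_eqF //= subr_eq0 => /eqP.
Qed.

Lemma PZ_sum_iterates k : PZ (\sum_(1 <= i < n) zs k i) = PZ (\sum_(1 <= i < n) zs 0%N i).
Proof.
elim: k => [//|k <-]; rewrite (eq_big_nat _ _ (fun i i_n => zs_step k i i_n)).
by rewrite big_split /= -!scaler_sumr PZD !PZZ PZ_sum_MT_T -scalerDl subrK scale1r.
Qed.

Lemma PZ_sum_limit {zbar : nat -> X} :
  (forall i, (1 <= i < n)%N -> (fun k => zs k i) @ \oo --> zbar i) ->
  PZ (\sum_(1 <= i < n) zbar i) = PZ (\sum_(1 <= i < n) zs 0%N i).
Proof.
move=> zs_cvg.
have sum_cvg : (fun k => \sum_(1 <= i < n) zs k i) @ \oo --> \sum_(1 <= i < n) zbar i.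
  rewrite big_nat; under eq_cvg do rewrite big_nat.
  by apply: cvg_big; [exact: add_continuous | exact: zs_cvg].
have PZ_cvg : (fun k => PZ (\sum_(1 <= i < n) zs k i)) @ \oo --> PZ (\sum_(1 <= i < n) zbar i).
  by apply: continuous_cvg => //; exact: (orth_proj_continuous ip_inner Z_sub PZ_orth).
move: PZ_cvg; under eq_cvg do rewrite PZ_sum_iterates.
by move/norm_cvg_lim => <-; rewrite norm_lim_cst.
Qed.

End Iterates.

End MalitskyTam.

Theorem mainTheorem2 (R : realType) (X : completeNormedModType R)
  (ip : X -> X -> R) (n : nat) (U : nat -> set X) (P : nat -> X -> X)
  (PZ : X -> X) (lam : R) (zs : nat -> nat -> X) :
  is_inner_product ip ->
  (3 <= n)%N ->
  (forall i, (1 <= i <= n)%N -> closed_subspace (U i)) ->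
  (forall i, (1 <= i <= n)%N -> is_orth_proj ip (U i) (P i)) ->
  is_orth_proj ip [set x | forall i, (1 <= i <= n)%N -> U i x] PZ ->
  0 < lam < 1 ->
  (forall k i, (1 <= i <= n.-1)%N ->
     zs k.+1 i = (1 - lam) *: zs k i + lam *: MT_T n P (zs k) i) ->
  let p := (n.-1)%:R^-1 *: \sum_(1 <= i < n) zs 0%N i in
  (exists zbar : nat -> X,
     (forall i, (1 <= i <= n.-1)%N -> (fun k => zs k i) @ \oo --> zbar i) /\
     (forall i, (1 <= i <= n.-1)%N -> MT_T n P zbar i = zbar i) /\
     (forall i, (1 <= i <= n)%N ->
        (fun k => MT_M n P (zs k) i) @ \oo --> MT_M n P zbar i) /\
     (forall i, (1 <= i <= n)%N -> MT_M n P zbar i = PZ p)) /\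
  (forall k, P 1%N (zs k 1%N) = MT_M n P (zs k) 1%N) /\
  ((fun k => P 1%N (zs k 1%N)) @ \oo --> PZ p) /\
  PZ p = (n.-1)%:R^-1 *: PZ (\sum_(1 <= i < n) zs 0%N i) /\
  (forall x0 : X, (forall i, (1 <= i <= n.-1)%N -> zs 0%N i = x0) ->
     (fun k => P 1%N (zs k 1%N)) @ \oo --> PZ x0).
Proof.
move=> ip_inner n_ge3 U_closed P_orth PZ_orth /andP[lam_gt0 lam_lt1] zs_step p.
have n_gt1 : (1 < n)%N by lia.
have idx i : (1 <= i <= n.-1)%N = (1 <= i < n)%N by apply/idP/idP; lia.
have U_sub i : (1 <= i <= n)%N -> linear_subspace (U i) by move=> /U_closed [_ []].
have Z_sub := linear_subspace_bigcap U_sub.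
have step k i : (1 <= i < n)%N -> zs k.+1 i = (1 - lam) *: zs k i + lam *: MT_T n P (zs k) i.
  by rewrite -idx; exact: zs_step.
have [zbar [zs_cvg zbar_fix]] := MT_iterates_cvg ip_inner n_gt1 U_sub P_orth lam_gt0 lam_lt1 step.
have M_eq i : (1 <= i <= n)%N -> MT_M n P zbar i = PZ p.
  move=> i_n; rewrite (MT_fixed_M_eq ip_inner n_gt1 U_sub P_orth PZ_orth zbar_fix _ i_n).
  rewrite (PZ_sum_limit ip_inner n_gt1 U_sub P_orth PZ_orth step zs_cvg).
  by rewrite /p (projZ ip_inner Z_sub PZ_orth).
have P1_M k : P 1%N (zs k 1%N) = MT_M n P (zs k) 1%N by rewrite MT_M_x //; lia.
have P1_cvg : (fun k => P 1%N (zs k 1%N)) @ \oo --> PZ p.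
  rewrite (funext P1_M) -(M_eq 1%N); last lia.
  by apply: (MT_M_cvg ip_inner n_gt1 U_sub P_orth zs_cvg); lia.
split.
  exists zbar; split; first by move=> i; rewrite idx; exact: zs_cvg.
  split; first by move=> i; rewrite idx; exact: zbar_fix.
  by split=> //; exact: (MT_M_cvg ip_inner n_gt1 U_sub P_orth zs_cvg).
split; first exact: P1_M.
split; first exact: P1_cvg.
split; first by rewrite /p (projZ ip_inner Z_sub PZ_orth).
move=> x0 zs0; suff -> : x0 = p by [].
rewrite /p -[LHS](mean_const x0 n_gt1); congr (_ *: _).
by apply: eq_big_nat => i i_n; rewrite zs0 ?idx.
Qed.
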